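(* Let $l>0$ (wheelbase length), $d\ge 0$ (distance from the rear axle center to the sensor point along the vehicle's longitudinal symmetry axis), and $\gamma_{\max}\in(0,\pi/2)$ (physical maximum steering angle). Let $\kappa_0\in\mathbb{R}$ be a constant path curvature that the vehicle is capable of following, i.e. $|d\,\kappa_0|<1$ and there exists a steering angle $\gamma$ with $|\gamma|\le\gamma_{\max}$ and $\tan\gamma=\dfrac{l\,\kappa_0}{\sqrt{1-d^2\kappa_0^2}}$. Define $\lambda_1=\sqrt{1-d^2\kappa_0^2}$ and $\lambda_2=1+(l^2-d^2)\kappa_0^2$. Then: (1) $|\kappa_0|\le\overline{\kappa}_0$, where $\overline{\kappa}_0=\dfrac{\tan\gamma_{\max}}{\sqrt{l^2+d^2\tan^2\gamma_{\max}}}$; (2) $\lambda_1\in[\underline{\lambda}_1,1]$, where $\underline{\lambda}_1=\dfrac{l}{\sqrt{l^2+d^2\tan^2\gamma_{\max}}}>0$; (3) $\lambda_2>0$.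
   Context: Kinematic bicycle model with no side slip: a vehicle with wheelbase $l$ follows a planar path with its sensor point A located on the longitudinal symmetry axis at distance $d$ in front of the rear axle center. When point A moves exactly along a circle of curvature $\kappa_0$, the required steering angle $\gamma$ satisfies $\tan\gamma = l\kappa_0/\sqrt{1-d^2\kappa_0^2}$. The standing assumption is that road curvatures are within the vehicle's steering capability, i.e. such a $\gamma$ with $|\gamma|\le\gamma_{\max}$ exists. *)

From Stdlib Require Import Reals.
Open Scope R_scope.

From Stdlib Require Import Reals Lra Psatz.
Open Scope R_scope.

(* Write u = 1 - d^2 k^2, T = tan gmax and L = l^2 + d^2 T^2.  Since tan is
   increasing on (-pi/2, pi/2), feasibility gives |l k / sqrt u| <= T, i.e.
   l^2 k^2 <= T^2 u.  Adding d^2 k^2 T^2 turns this into k^2 L <= T^2, which is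
   bound (1), and the identity u L = l^2 + d^2 (T^2 - k^2 L) then gives
   u L >= l^2, which is bound (2).  Finally lambda2 = u + l^2 k^2 > 0. *)

Lemma tan_le (a b : R) : - PI / 2 < a -> a <= b -> b < PI / 2 -> tan a <= tan b.
Proof.
  intros ha hab hb.
  destruct (Rle_lt_or_eq_dec a b hab) as [hlt | ->].
  - left; apply tan_increasing; lra.
  - apply Rle_refl.
Qed.

Lemma Rabs_tan_le (g gmax : R) :
  Rabs g <= gmax -> gmax < PI / 2 -> Rabs (tan g) <= tan gmax.
Proof.
  intros hg hgmax.
  assert (hhigh : g <= gmax) by exact (Rle_trans _ _ _ (Rle_abs g) hg).
  assert (hlow : - g <= gmax).
  { rewrite <- Rabs_Ropp in hg; exact (Rle_trans _ _ _ (Rle_abs (- g)) hg). }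
  apply Rabs_le; split.
  - rewrite <- tan_neg; apply tan_le; lra.
  - apply tan_le; lra.
Qed.

Lemma Rabs_le_div_sqrt (x z y : R) :
  0 <= z -> 0 < y -> x ^ 2 * y <= z ^ 2 -> Rabs x <= z / sqrt y.
Proof.
  intros hz hy hxy.
  rewrite <- (sqrt_pow2 (Rabs x)) by apply Rabs_pos.
  rewrite <- (sqrt_pow2 z hz) at 1.
  rewrite <- sqrt_div_alt by exact hy.
  apply sqrt_le_1_alt.
  rewrite pow2_abs.
  apply Rmult_le_reg_r with y; [exact hy |].
  unfold Rdiv; rewrite Rmult_assoc, Rinv_l, Rmult_1_r by lra.
  exact hxy.
Qed.

Lemma div_sqrt_le_sqrt (x w y : R) :
  0 <= x -> 0 < y -> x ^ 2 <= w * y -> x / sqrt y <= sqrt w.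
Proof.
  intros hx hy hxy.
  rewrite <- (sqrt_pow2 x hx) at 1.
  rewrite <- sqrt_div_alt by exact hy.
  apply sqrt_le_1_alt.
  apply Rmult_le_reg_r with y; [exact hy |].
  unfold Rdiv; rewrite Rmult_assoc, Rinv_l, Rmult_1_r by lra.
  exact hxy.
Qed.

Lemma sqr_le_of_Rabs_div_sqrt_le (a u T : R) :
  0 < u -> Rabs (a / sqrt u) <= T -> a ^ 2 <= T ^ 2 * u.
Proof.
  intros hu haT.
  assert (hs : 0 < sqrt u) by (apply sqrt_lt_R0; exact hu).
  assert (ha : a = a / sqrt u * sqrt u) by (field; lra).
  rewrite ha, Rpow_mult_distr, pow2_sqrt by lra.
  apply Rmult_le_compat_r; [lra |].
  rewrite <- pow2_abs.
  apply pow_incr; split; [apply Rabs_pos | exact haT].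
Qed.

Lemma one_sub_sqr_pos (x : R) : Rabs x < 1 -> 0 < 1 - x ^ 2.
Proof.
  intros hx.
  rewrite <- pow2_abs.
  pose proof (Rabs_pos x).
  nra.
Qed.

Theorem claim1 (l d gmax kappa0 : R)
  (hl : 0 < l) (hd : 0 <= d)
  (hg0 : 0 < gmax) (hg1 : gmax < PI / 2)
  (hdk : Rabs (d * kappa0) < 1)
  (hfeas : exists gamma : R,
      Rabs gamma <= gmax /\
      tan gamma = l * kappa0 / sqrt (1 - d ^ 2 * kappa0 ^ 2)) :
  let lambda1 := sqrt (1 - d ^ 2 * kappa0 ^ 2) in
  let lambda2 := 1 + (l ^ 2 - d ^ 2) * kappa0 ^ 2 in
  let kappa_bar := tan gmax / sqrt (l ^ 2 + d ^ 2 * (tan gmax) ^ 2) in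
  let lambda1_low := l / sqrt (l ^ 2 + d ^ 2 * (tan gmax) ^ 2) in
  Rabs kappa0 <= kappa_bar /\
  (0 < lambda1_low /\ lambda1_low <= lambda1 /\ lambda1 <= 1) /\
  0 < lambda2.
Proof.
  intros lambda1 lambda2 kappa_bar lambda1_low.
  destruct hfeas as [gamma [hgamma htan]].
  set (T := tan gmax) in *.
  set (u := 1 - d ^ 2 * kappa0 ^ 2) in *.
  set (L := l ^ 2 + d ^ 2 * T ^ 2) in *.
  assert (hT : 0 < T) by (apply tan_gt_0; lra).
  assert (hu : 0 < u) by (unfold u; rewrite <- Rpow_mult_distr; apply one_sub_sqr_pos, hdk).
  assert (hL : 0 < L) by (unfold L; nra).
  assert (hsteer : (l * kappa0) ^ 2 <= T ^ 2 * u).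
  { apply sqr_le_of_Rabs_div_sqrt_le; [exact hu |].
    rewrite <- htan; apply Rabs_tan_le; assumption. }
  assert (hcurv : kappa0 ^ 2 * L <= T ^ 2) by (unfold L, u in *; nra).
  assert (hlambda1 : l ^ 2 <= u * L).
  { assert (0 <= d ^ 2 * (T ^ 2 - kappa0 ^ 2 * L)) by (apply Rmult_le_pos; nra).
    unfold L, u in *; nra. }
  split; [| split; [split; [| split] |]].
  - apply Rabs_le_div_sqrt; lra.
  - apply Rdiv_lt_0_compat; [exact hl | apply sqrt_lt_R0, hL].
  - apply div_sqrt_le_sqrt; lra.
  - rewrite <- sqrt_1; apply sqrt_le_1_alt; unfold u; nra.
  - unfold lambda2, u in *; nra.
Qed.
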